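(* Let $X$ and $Y$ be nonempty totally bounded metric spaces. Then $d^{us}_{GH}(X,Y)=d_{GH}(X,Y)$.
   Context: For a metric space, $|xy|$ denotes distance. A set-valued map $f:X\rightrightarrows Y$ assigns to each $x\in X$ a nonempty $f(x)\subseteq Y$ and is identified with its graph. A correspondence between $X$ and $Y$ is a subset $R\subseteq X\times Y$ whose projections to $X$ and to $Y$ are both surjective, regarded as the set-valued map $x\mapsto R(x)=\{y:(x,y)\in R\}$; $R^{-1}=\{(y,x):(x,y)\in R\}$; $\mathcal R(X,Y)$ is the set of all correspondences. The distortion of a nonempty $\sigma\subseteq X\times Y$ is $\operatorname{dis}\sigma=\sup\{||xx'|-|yy'||:(x,y),(x',y')\in\sigma\}\in[0,\infty]$, and $d_{GH}(X,Y)=\frac12\inf\{\operatorname{dis}R:R\in\mathcal R(X,Y)\}$. A set-valued map $f$ is upper semicontinuous if for every $x$ and every open $U\supseteq f(x)$ there is a neighborhood $V$ of $x$ with $f(x')\subseteq U$ for all $x'\in V$. $\mathcal R_{us}(X,Y)$ is the set of $R\in\mathcal R(X,Y)$ with both $R$ and $R^{-1}$ upper semicontinuous, and $d^{us}_{GH}(X,Y)=\frac12\inf\{\operatorname{dis}R:R\in\mathcal R_{us}(X,Y)\}$. *)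

From HB Require Import structures.
From mathcomp Require Import all_boot all_order all_algebra.
From mathcomp Require Import all_classical all_reals ereal.
Set Implicit Arguments. Unset Strict Implicit. Unset Printing Implicit Defensive.
Import Order.TTheory GRing.Theory Num.Theory.
Local Open Scope classical_set_scope.
Local Open Scope ring_scope.

Definition is_metric (R : realType) (X : Type) (d : X -> X -> R) : Prop :=
  (forall x y, 0 <= d x y) /\
  (forall x y, d x y = 0 <-> x = y) /\
  (forall x y, d x y = d y x) /\
  (forall x y z, d x z <= d x y + d y z).

Definition mopen (R : realType) (X : Type) (d : X -> X -> R) (U : set X) : Prop :=
  forall x, U x -> exists2 r : R, 0 < r & forall x', d x x' < r -> U x'.

Definition totally_bounded (R : realType) (X : Type) (d : X -> X -> R) : Prop :=
  forall eps : R, 0 < eps ->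
    exists2 A : set X, finite_set A & forall x, exists2 a, A a & d a x < eps.

Definition correspondence (X Y : Type) (C : set (X * Y)) : Prop :=
  (forall x, exists y, C (x, y)) /\ (forall y, exists x, C (x, y)).

Definition image_of (X Y : Type) (C : set (X * Y)) (x : X) : set Y :=
  [set y | C (x, y)].

Definition inverse_rel (X Y : Type) (C : set (X * Y)) : set (Y * X) :=
  [set p | C (p.2, p.1)].

Definition usc (R : realType) (X Y : Type) (dX : X -> X -> R) (dY : Y -> Y -> R)
    (C : set (X * Y)) : Prop :=
  forall x (U : set Y), mopen dY U -> image_of C x `<=` U ->
    exists2 r : R, 0 < r & forall x', dX x x' < r -> image_of C x' `<=` U.

Definition distortion (R : realType) (X Y : Type) (dX : X -> X -> R) (dY : Y -> Y -> R)
    (s : set (X * Y)) : \bar R :=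
  ereal_sup [set (`| dX p.1 q.1 - dY p.2 q.2 |)%:E | p in s & q in s].

Definition dGH (R : realType) (X Y : Type) (dX : X -> X -> R) (dY : Y -> Y -> R) : \bar R :=
  ((2 : R)^-1)%:E * ereal_inf [set distortion dX dY C | C in correspondence (X:=X) (Y:=Y)].

Definition correspondence_us (R : realType) (X Y : Type) (dX : X -> X -> R)
    (dY : Y -> Y -> R) (C : set (X * Y)) : Prop :=
  correspondence C /\ usc dX dY C /\ usc dY dX (inverse_rel C).

Definition dGH_us (R : realType) (X Y : Type) (dX : X -> X -> R) (dY : Y -> Y -> R) : \bar R :=
  ((2 : R)^-1)%:E * ereal_inf [set distortion dX dY C | C in correspondence_us dX dY].

(** Every correspondence [C] can be replaced, at a cost of [8 e] in distortion,
    by one that is upper semicontinuous in both directions.  Fix finite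
    [e]-nets [A] of [X] and [B] of [Y], call [a] and [b] linked when some
    [(x0, y0)] in [C] lies within [e] of [(a, b)], and relate [x] and [y]
    whenever they lie in the closed [e]-balls around linked net points.
    Because only finitely many closed balls occur, a point close enough to [x]
    lies in no ball that misses [x]; hence images can only shrink near [x],
    which gives upper semicontinuity.  Hence the infimum over the smaller
    class of correspondences is no larger. *)
From mathcomp Require Import all_boot all_order all_algebra.
From mathcomp Require Import all_classical all_reals ereal.
From mathcomp Require Import lra.
Set Implicit Arguments. Unset Strict Implicit. Unset Printing Implicit Defensive.
Import Order.TTheory GRing.Theory Num.Theory.
Local Open Scope classical_set_scope.
Local Open Scope ring_scope.

Lemma seq_pos_lbound (R : realDomainType) (s : seq R) :
  (forall x, x \in s -> 0 < x) -> exists2 r : R, 0 < r & forall x, x \in s -> r <= x.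
Proof.
elim: s => [|a s IH] spos; first by exists 1 => // x; rewrite in_nil.
have [r r0 rs] := IH (fun x xs => spos x (mem_behead (s := a :: s) xs)).
exists (Num.min a r) => [|x]; first by rewrite lt_min r0 spos ?mem_head.
rewrite in_cons => /predU1P[->|xs]; rewrite ge_min.
  by rewrite lexx.
by rewrite rs ?orbT.
Qed.

Lemma finite_pos_lbound (R : realType) (T : Type) (A : set T) (f : T -> R) :
  finite_set A -> exists2 r : R, 0 < r & forall a, A a -> 0 < f a -> r <= f a.
Proof.
move=> finA.
have : finite_set [set f a | a in A `&` [set a | 0 < f a]].
  by apply: finite_image; apply: finite_setI; left.
move=> /finite_seqP[s fAs].
have [|r r0 rs] := @seq_pos_lbound R s.
  by move=> x xs; have : [set` s] x by []; rewrite -fAs => -[a [_ /= ?] <-].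
exists r => // a Aa fa; apply: rs.
by have : [set` s] (f a) by rewrite -fAs; exists a.
Qed.

Lemma norm_sub_le_shift (R : realDomainType) (u v w z r : R) :
  `|u - w| <= r -> `|v - z| <= r -> `|u - v| <= `|w - z| + (r + r).
Proof.
have := ler_distD w u v; have := ler_distD z w v; rewrite (distrC z v); lra.
Qed.

Section MetricFacts.
Variables (R : realType) (X : Type) (d : X -> X -> R).
Hypothesis hd : is_metric d.

Lemma dist_xx (x : X) : d x x = 0.
Proof. by case: hd => _ [dxx _]; apply/dxx. Qed.

Lemma dist_via (x y a : X) : d x y <= d x a + d y a.
Proof. by case: hd => _ [_ [dsym dtri]]; rewrite (dsym y a). Qed.

Lemma dist_quadrilateral (x y x' y' : X) :
  `|d x x' - d y y'| <= d x y + d x' y'.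
Proof.
case: hd => _ [_ [dsym dtri]].
have := dtri x y x'; have := dtri y y' x'; have := dtri y x y'; have := dtri x x' y'.
rewrite (dsym y x) (dsym y' x') ler_norml => *; apply/andP; split; lra.
Qed.

Lemma dist_diff_le_near (x y x' y' a a' : X) (e : R) :
  d x a <= e -> d y a <= e -> d x' a' <= e -> d y' a' <= e ->
  `|d x x' - d y y'| <= 4 * e.
Proof.
move=> xa ya x'a' y'a'; apply: le_trans (dist_quadrilateral x y x' y') _.
have := dist_via x y a; have := dist_via x' y' a'; lra.
Qed.

Lemma usc_closed_balls_finite (Y : Type) (dY : Y -> Y -> R) (A : set X)
    (e : R) (P : X -> Y -> Prop) :
  finite_set A -> usc d dY [set p | exists2 a, A a & d p.1 a <= e /\ P a p.2].
Proof.
move=> finA x U _ CxU.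
have [r r0 rmin] := finite_pos_lbound (fun a => d x a - e) finA.
exists r => // x' xx' y /= [a Aa [x'a Pay]]; apply: CxU; exists a => //; split=> //.
rewrite leNgt; apply/negP => xa.
have := rmin a Aa; rewrite subr_gt0 => /(_ xa).
have := dist_via x a x'; case: hd => _ [_ [dsym _]]; rewrite (dsym a x'); lra.
Qed.

End MetricFacts.

Definition net_thickening (R : realType) (X Y : Type) (dX : X -> X -> R)
    (dY : Y -> Y -> R) (A : set X) (B : set Y) (e : R) (D : X -> Y -> Prop) :
    set (X * Y) :=
  [set p | exists2 a, A a & dX p.1 a <= e /\ exists2 b, B b & dY p.2 b <= e /\ D a b].

Definition linked (R : realType) (X Y : Type) (dX : X -> X -> R) (dY : Y -> Y -> R)
    (C : set (X * Y)) (e : R) (a : X) (b : Y) : Prop :=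
  exists x0 y0, C (x0, y0) /\ dX x0 a < e /\ dY y0 b < e.

Section NetThickening.
Variables (R : realType) (X Y : Type) (dX : X -> X -> R) (dY : Y -> Y -> R).

Lemma inverse_net_thickening A B e D :
  inverse_rel (net_thickening dX dY A B e D) =
  net_thickening dY dX B A e (fun b a => D a b).
Proof.
apply/seteqP; split => -[y x] /=.
  by move=> [a Aa [xa [b Bb [yb Dab]]]]; exists b => //; split => //; exists a.
by move=> [b Bb [yb [a Aa [xa Dab]]]]; exists a => //; split => //; exists b.
Qed.

Hypotheses (hX : is_metric dX) (hY : is_metric dY).

Lemma net_thickening_us A B e D :
  finite_set A -> finite_set B ->
  usc dX dY (net_thickening dX dY A B e D) /\
  usc dY dX (inverse_rel (net_thickening dX dY A B e D)).
Proof.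
move=> finA finB; rewrite inverse_net_thickening.
split.
  exact: (@usc_closed_balls_finite _ _ _ hX _ _ _ _
    (fun a y => exists2 b, B b & dY y b <= e /\ D a b) finA).
exact: (@usc_closed_balls_finite _ _ _ hY _ _ _ _
  (fun b x => exists2 a, A a & dX x a <= e /\ D a b) finB).
Qed.

Lemma net_thickening_correspondence C A B e :
  0 < e -> correspondence C ->
  (forall x, exists2 a, A a & dX a x < e) -> (forall y, exists2 b, B b & dY b y < e) ->
  correspondence (net_thickening dX dY A B e (linked dX dY C e)).
Proof.
case: hX => _ [_ [dXs _]]; case: hY => _ [_ [dYs _]].
move=> e0 [CX CY] netA netB; split.
- move=> x; have [a Aa ax] := netA x; have [y0 Cay0] := CX a.
  have [b Bb by0] := netB y0.
  exists b; exists a => //; split; first by rewrite dXs ltW.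
  exists b => //; split; first by rewrite (dist_xx hY) ltW.
  by exists a, y0; rewrite (dist_xx hX) dYs.
- move=> y; have [b Bb byy] := netB y; have [x0 Cx0b] := CY b.
  have [a Aa ax0] := netA x0.
  exists a; exists a => //; split; first by rewrite (dist_xx hX) ltW.
  exists b => //; split; first by rewrite dYs ltW.
  by exists x0, b; rewrite (dist_xx hY) dXs.
Qed.

Lemma distortion_net_thickening C A B e :
  (distortion dX dY (net_thickening dX dY A B e (linked dX dY C e)) <=
   distortion dX dY C + (8 * e)%:E)%E.
Proof.
apply: ge_ereal_sup => z [[x y] [a _ [/= xa [b _ [yb [x0 [y0 [C0 [x0a y0b]]]]]]]]].
move=> [[x' y'] [a' _ [/= xa' [b' _ [yb' [x0' [y0' [C0' [x0a' y0b']]]]]]]]] <- /=.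
have C0C0' : ((`|dX x0 x0' - dY y0 y0'|)%:E <= distortion dX dY C)%E.
  by apply: ereal_sup_ubound; exists (x0, y0) => //; exists (x0', y0').
apply: le_trans (leeD2r _ C0C0'); rewrite -EFinD lee_fin.
have dXnear := dist_diff_le_near hX xa (ltW x0a) xa' (ltW x0a').
have dYnear := dist_diff_le_near hY yb (ltW y0b) yb' (ltW y0b').
have -> : 8 * e = 4 * e + 4 * e by lra.
exact: norm_sub_le_shift.
Qed.

End NetThickening.

Lemma correspondence_us_approx (R : realType) (X Y : Type)
    (dX : X -> X -> R) (dY : Y -> Y -> R) (hX : is_metric dX) (hY : is_metric dY)
    (tbX : totally_bounded dX) (tbY : totally_bounded dY) (C : set (X * Y)) (e : R) :
  correspondence C -> 0 < e ->
  exists2 C', correspondence_us dX dY C' &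
    (distortion dX dY C' <= distortion dX dY C + (8 * e)%:E)%E.
Proof.
move=> hC e0; have [A finA netA] := tbX e e0; have [B finB netB] := tbY e e0.
exists (net_thickening dX dY A B e (linked dX dY C e)).
  by split; [exact: net_thickening_correspondence | exact: net_thickening_us].
exact: distortion_net_thickening.
Qed.

Theorem mainTheorem8 (R : realType) (X Y : Type) (dX : X -> X -> R) (dY : Y -> Y -> R)
  (hX : is_metric dX) (hY : is_metric dY) (neX : inhabited X) (neY : inhabited Y)
  (tbX : totally_bounded dX) (tbY : totally_bounded dY) :
  dGH_us dX dY = dGH dX dY.
Proof.
rewrite /dGH_us /dGH; congr (_ * _)%E; apply/eqP; rewrite eq_le; apply/andP; split.
- apply: le_ereal_inf_tmp => _ [C hC <-]; apply/lee_addgt0Pr => e e0.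
  have [C' hC' distC'] := correspondence_us_approx hX hY tbX tbY hC (divr_gt0 e0 (ltr0n _ 8)).
  rewrite mulrC divfK // in distC'.
  by apply: le_trans distC'; apply: ereal_inf_lbound; exists C'.
- by apply: ereal_inf_le_tmp => _ [C [hC _] <-]; exists C.
Qed.
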